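(* Let $n\ge1$. For all $w_1,w_2\in\mathrm{BB}_n$ and $\gamma\in\Gamma_{n+1}=\{1,e_n,X_n,Y_{n+1}\}$ one has $\epsilon_n(w_1\gamma w_2)=\mathrm{tr}(\gamma)\,w_1w_2$ and $\mathrm{tr}(w_1\gamma w_2)=\mathrm{tr}(\gamma)\,\mathrm{tr}(w_1w_2)$.
   Context: $R$ is an integral domain with units $q,\lambda,x,q_0$ and elements $A,q_1$; $\delta=q-q^{-1}$; standing assumptions $x\delta=\delta-\lambda+\lambda^{-1}$, $q_0=q^{-1}$, $A(1-q_0\lambda)=q_1x$. $\mathrm{BB}_n$ is the unital associative $R$-algebra generated by invertible $Y,X_1,\dots,X_{n-1}$ and elements $e_1,\dots,e_{n-1}$ with relations: $X_iX_j=X_jX_i$, $e_ie_j=e_je_i$ for $|i-j|>1$; $X_iX_jX_i=X_jX_iX_j$ for $|i-j|=1$; $X_ie_i=e_iX_i=\lambda e_i$; $e_i^2=xe_i$; $X_i^{-1}=X_i-\delta+\delta e_i$; $X_i^2=1+\delta X_i-\delta\lambda e_i$; for $|i-j|=1$ (signs consistent): $e_iX_j^{\pm1}e_i=\lambda^{\mp1}e_i$, $e_ie_je_i=e_i$, $e_iX_j^{\pm1}X_i^{\pm1}=X_j^{\pm1}X_i^{\pm1}e_j$, $X_i^{\pm1}e_je_i=X_j^{\mp1}e_i$, $e_ie_jX_i^{\pm1}=e_iX_j^{\mp1}$, $e_iX_j^{\pm1}X_i^{\pm1}=e_ie_j$, $X_i^{\pm1}X_j^{\pm1}e_i=e_je_i$,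 $X_ie_jX_i^{-1}=X_j^{-1}e_iX_j$, $X_ie_jX_i=X_j^{-1}e_iX_j^{-1}$; and $X_1YX_1Y=YX_1YX_1$, $Y^2=q_1Y+q_0$, $YX_1Ye_1=e_1$, $YX_i=X_iY$ ($i>1$), $e_1Ye_1=Ae_1$; it is assumed that $e_1\in\mathrm{BB}_2$ is nonzero with $re_1=0\Rightarrow r=0$, and $e_1,Ye_1$ linearly independent. $\mathrm{BB}_0=R$; $\mathrm{BB}_m\subset\mathrm{BB}_n$ ($m\le n$) as the subalgebra generated by $Y,X_i,e_i$ with $i\le m-1$. $Y_{n+1}:=X_nX_{n-1}\cdots X_1YX_1^{-1}\cdots X_n^{-1}$. Hypothesis (assumed): for every $n$ the map $\mathrm{BB}_n\to\mathrm{BB}_{n+2}$, $a\mapsto x^{-1}ae_{n+1}$, is injective. Conditional expectation: for $a\in\mathrm{BB}_{n+1}$, $\epsilon_n(a)\in\mathrm{BB}_n$ is the element with $e_{n+1}ae_{n+1}=x\,\epsilon_n(a)e_{n+1}$ in $\mathrm{BB}_{n+2}$. Trace: $\mathrm{tr}(r)=r$ on $\mathrm{BB}_0=R$ and $\mathrm{tr}(a)=\mathrm{tr}(\epsilon_{n-1}(a))$ for $a\in\mathrm{BB}_n$. *)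

From HB Require Import structures.
From mathcomp Require Import all_boot all_order all_algebra.
From Stdlib Require Import ClassicalEpsilon.
Set Implicit Arguments. Unset Strict Implicit. Unset Printing Implicit Defensive.
Import GRing.Theory.
Local Open Scope ring_scope.

(* Data of the tower BB_0 ⊂ BB_1 ⊂ BB_2 ⊂ ... realised inside one R-algebra
   [A] (think of A as the union BB_∞): the parameters of the paper and the
   generators Y, X_i, e_i (i >= 1). *)
Record BBdata (R : idomainType) (A : algType R) := BBData {
  bq : R; blam : R; bx : R; bq0 : R; bA : R; bq1 : R;
  bY : A; bX : nat -> A; be : nat -> A }.

Section Defs.
Variables (R : idomainType) (A : algType R) (D : @BBdata R A).

Definition bdelta : R := bq D - (bq D)^-1.

Definition bXinv (i : nat) : A := bX D i - bdelta%:A + bdelta *: be D i.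

Definition bXs (s : bool) (i : nat) : A := if s then bX D i else bXinv i.

(* Y_1 = Y, Y_{k+1} = X_k Y_k X_k^{-1}, so that
   Y_{n+1} = X_n ... X_1 Y X_1^{-1} ... X_n^{-1} *)
Fixpoint bYk (k : nat) : A :=
  match k with
  | 0 => bY D
  | 1 => bY D
  | m.+1 => bX D m * bYk m * bXinv m
  end.

Inductive inBB (n : nat) : A -> Prop :=
  | bb_scal (r : R) : inBB n (r%:A)
  | bb_Y : (1 <= n)%N -> inBB n (bY D)
  | bb_X (i : nat) : (1 <= i)%N -> (i < n)%N -> inBB n (bX D i)
  | bb_e (i : nat) : (1 <= i)%N -> (i < n)%N -> inBB n (be D i)
  | bb_add a b : inBB n a -> inBB n b -> inBB n (a + b)
  | bb_mul a b : inBB n a -> inBB n b -> inBB n (a * b).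

Definition beps (n : nat) (a : A) : A :=
  epsilon (inhabits 0) (fun z => inBB n z /\
     be D n.+1 * a * be D n.+1 = bx D *: (z * be D n.+1)).

Fixpoint btr (n : nat) (a : A) : R :=
  match n with
  | 0 => epsilon (inhabits 0) (fun r : R => a = r%:A)
  | m.+1 => btr m (beps m a)
  end.

Definition adj (i j : nat) := (i == j.+1) || (j == i.+1).
Definition far (i j : nat) := (j.+1 < i)%N || (i.+1 < j)%N.

Record BBaxioms : Prop := {
  ax_q_unit : bq D \is a GRing.unit;
  ax_lam_unit : blam D \is a GRing.unit;
  ax_x_unit : bx D \is a GRing.unit;
  ax_q0_unit : bq0 D \is a GRing.unit;
  ax_x_delta : bx D * bdelta = bdelta - blam D + (blam D)^-1;
  ax_q0 : bq0 D = (bq D)^-1;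
  ax_A : bA D * (1 - bq0 D * blam D) = bq1 D * bx D;
  ax_Y_inv : exists Yi : A, bY D * Yi = 1 /\ Yi * bY D = 1;
  ax_X_inv : forall i, (1 <= i)%N -> bX D i * bXinv i = 1 /\ bXinv i * bX D i = 1;
  ax_XX_far : forall i j, (1 <= i)%N -> (1 <= j)%N -> far i j ->
     bX D i * bX D j = bX D j * bX D i;
  ax_ee_far : forall i j, (1 <= i)%N -> (1 <= j)%N -> far i j ->
     be D i * be D j = be D j * be D i;
  ax_Xe_far : forall i j, (1 <= i)%N -> (1 <= j)%N -> far i j ->
     bX D i * be D j = be D j * bX D i;
  ax_braid : forall i j, (1 <= i)%N -> (1 <= j)%N -> adj i j ->
     bX D i * bX D j * bX D i = bX D j * bX D i * bX D j;
  ax_Xe : forall i, (1 <= i)%N -> bX D i * be D i = blam D *: be D i /\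
                                   be D i * bX D i = blam D *: be D i;
  ax_ee : forall i, (1 <= i)%N -> be D i * be D i = bx D *: be D i;
  ax_XX : forall i, (1 <= i)%N ->
     bX D i * bX D i = 1 + bdelta *: bX D i - (bdelta * blam D) *: be D i;
  ax_eXe : forall i j s, (1 <= i)%N -> (1 <= j)%N -> adj i j ->
     be D i * bXs s j * be D i = (if s then (blam D)^-1 else blam D) *: be D i;
  ax_eee : forall i j, (1 <= i)%N -> (1 <= j)%N -> adj i j ->
     be D i * be D j * be D i = be D i;
  ax_eXX : forall i j s, (1 <= i)%N -> (1 <= j)%N -> adj i j ->
     be D i * bXs s j * bXs s i = bXs s j * bXs s i * be D j;
  ax_Xee : forall i j s, (1 <= i)%N -> (1 <= j)%N -> adj i j ->
     bXs s i * be D j * be D i = bXs (~~ s) j * be D i;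
  ax_eeX : forall i j s, (1 <= i)%N -> (1 <= j)%N -> adj i j ->
     be D i * be D j * bXs s i = be D i * bXs (~~ s) j;
  ax_eXX' : forall i j s, (1 <= i)%N -> (1 <= j)%N -> adj i j ->
     be D i * bXs s j * bXs s i = be D i * be D j;
  ax_XXe : forall i j s, (1 <= i)%N -> (1 <= j)%N -> adj i j ->
     bXs s i * bXs s j * be D i = be D j * be D i;
  ax_XeXinv : forall i j, (1 <= i)%N -> (1 <= j)%N -> adj i j ->
     bX D i * be D j * bXinv i = bXinv j * be D i * bX D j;
  ax_XeX : forall i j, (1 <= i)%N -> (1 <= j)%N -> adj i j ->
     bX D i * be D j * bX D i = bXinv j * be D i * bXinv j;
  ax_YX1 : bX D 1 * bY D * bX D 1 * bY D = bY D * bX D 1 * bY D * bX D 1;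
  ax_Y2 : bY D * bY D = bq1 D *: bY D + (bq0 D)%:A;
  ax_YXYe : bY D * bX D 1 * bY D * be D 1 = be D 1;
  ax_YX : forall i, (1 < i)%N -> bY D * bX D i = bX D i * bY D;
  ax_Ye : forall i, (1 < i)%N -> bY D * be D i = be D i * bY D;
  ax_eYe : be D 1 * bY D * be D 1 = bA D *: be D 1;
  ax_e1_nz : be D 1 != 0;
  ax_e1_tf : forall r : R, r *: be D 1 = 0 -> r = 0;
  ax_e1_Ye1_indep : forall r s : R, r *: be D 1 + s *: (bY D * be D 1) = 0 ->
     r = 0 /\ s = 0;
  ax_inj : forall n a b, inBB n a -> inBB n b ->
     (bx D)^-1 *: (a * be D n.+1) = (bx D)^-1 *: (b * be D n.+1) -> a = b
}.

End Defs.

From HB Require Import structures.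
From mathcomp Require Import all_boot all_order all_algebra.
From Stdlib Require Import ClassicalEpsilon.
From mathcomp Require Import zify.
Import GRing.Theory.
Local Open Scope ring_scope.
Set Implicit Arguments. Unset Strict Implicit.

(* For g in {1, e_n, X_n, Y_{n+1}} the relations give e_{n+1} g e_{n+1} =
   t e_{n+1} with t = x, 1, lam^-1, A respectively.  As e_{n+1} commutes with
   BB_n, e_{n+1} (w1 g w2) e_{n+1} = t w1 w2 e_{n+1}, and the injectivity
   hypothesis turns this into eps_n(w1 g w2) = x^-1 t w1 w2; in particular
   tr(g) = x^-1 t.
   The trace identity also needs tr to be R-linear on BB_n.  Since eps and tr
   are defined by choice, this requires eps_m to exist on all of BB_{m+1},
   i.e. e_{m+1} BB_{m+1} e_{m+1} to lie in BB_m e_{m+1}.  This is proved by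
   induction on m, together with the fact that BB_{m+1} is spanned as a
   BB_m-bimodule by 1, e_m, X_m, J_{m+1} and e_m J_{m+1}, where J_1 = Y and
   J_{m+1} = X_m J_m X_m. *)

Lemma mulrA_ctx2 (T : pzSemiRingType) (a b c : T) :
  a * b = c -> forall t, a * (b * t) = c * t.
Proof. by move=> H t; rewrite mulrA H. Qed.
Lemma mulrA_ctx3 (T : pzSemiRingType) (a b c d : T) :
  a * b * c = d -> forall t, a * (b * (c * t)) = d * t.
Proof. by move=> H t; rewrite !mulrA H. Qed.
Lemma mulrA_ctx4 (T : pzSemiRingType) (a b c d f : T) :
  a * b * c * d = f -> forall t, a * (b * (c * (d * t))) = f * t.
Proof. by move=> H t; rewrite !mulrA H. Qed.
Lemma mulrA3 (T : pzSemiRingType) (a b c d : T) : a * b * c = d -> a * (b * c) = d.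
Proof. by move=> H; rewrite mulrA H. Qed.
Lemma mulrA4 (T : pzSemiRingType) (a b c d f : T) :
  a * b * c * d = f -> a * (b * (c * d)) = f.
Proof. by move=> H; rewrite !mulrA H. Qed.
Lemma mulrA5 (T : pzSemiRingType) (a b c d f g : T) :
  a * b * c * d * f = g -> a * (b * (c * (d * f))) = g.
Proof. by move=> H; rewrite !mulrA H. Qed.

(* Words are kept right-associated with scalars pulled out; [rewrite_word H]
   rewrites with a left-associated relation [H : a * b * c = d] inside them. *)
Ltac normalize_word := rewrite -?scalerAl -?scalerAr -?mulrA ?mulr1 ?mul1r.
Ltac rewrite_word H :=
  first [ rewrite (mulrA_ctx4 H) | rewrite (mulrA4 H) | rewrite (mulrA_ctx3 H)
        | rewrite (mulrA3 H) | rewrite (mulrA_ctx2 H) | rewrite H ];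
  normalize_word.

Section BB.
Variables (R : idomainType) (A : algType R) (D : @BBdata R A).
Hypothesis ax : BBaxioms D.

Local Notation e := (be D).
Local Notation X := (bX D).
Local Notation Xinv := (bXinv D).
Local Notation Y := (bY D).
Local Notation lam := (blam D).
Local Notation x := (bx D).
Local Notation delta := (bdelta D).
Local Notation BB := (inBB D).

Let lam_unit := ax_lam_unit ax.
Let x_unit := ax_x_unit ax.

Lemma mulXinvX i : (1 <= i)%N -> Xinv i * X i = 1.
Proof. by case/(ax_X_inv ax). Qed.
Lemma mulXe i : (1 <= i)%N -> X i * e i = lam *: e i.
Proof. by case/(ax_Xe ax). Qed.
Lemma muleX i : (1 <= i)%N -> e i * X i = lam *: e i.
Proof. by case/(ax_Xe ax). Qed.
Lemma mulee i : (1 <= i)%N -> e i * e i = x *: e i.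
Proof. exact: (ax_ee ax). Qed.

(** * The subalgebras BB_m *)

Lemma inBBW m m' a : (m <= m')%N -> BB m a -> BB m' a.
Proof.
move=> lemm'; elim=> *; try by constructor.
- by apply: bb_Y; lia.
- by apply: bb_X => //; lia.
- by apply: bb_e => //; lia.
Qed.

Lemma inBBS m a : BB m a -> BB m.+1 a.
Proof. exact: inBBW. Qed.

Lemma inBBZ m r a : BB m a -> BB m (r *: a).
Proof. by move=> ha; rewrite -mulr_algl; apply: bb_mul => //; apply: bb_scal. Qed.

Lemma inBB1 m : BB m 1.
Proof. by rewrite -(scale1r 1); apply: bb_scal. Qed.

Lemma inBBB m a b : BB m a -> BB m b -> BB m (a - b).
Proof. by move=> ha hb; apply: bb_add => //; rewrite -scaleN1r; apply: inBBZ. Qed.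

Lemma inBB_Xinv m i : (1 <= i)%N -> (i < m)%N -> BB m (Xinv i).
Proof.
move=> i_gt0 lt_im; apply: bb_add; last by apply: inBBZ; apply: bb_e.
by apply: inBBB; [apply: bb_X | apply: bb_scal].
Qed.

Lemma inBB0 a : BB 0 a -> exists r, a = r%:A.
Proof.
elim=> [r||i|i|a1 b1 _ [r1 ->] _ [r2 ->]|a1 b1 _ [r1 ->] _ [r2 ->]] //; try lia.
- by exists r.
- by exists (r1 + r2); rewrite scalerDl.
- by exists (r1 * r2); rewrite mulr_algl scalerA.
Qed.

Lemma algr_inj r s : r%:A = s%:A :> A -> r = s.
Proof.
move=> rs; apply/eqP; rewrite -subr_eq0; apply/eqP; apply: (ax_e1_tf ax).
by rewrite scalerBl -(mulr_algl r) -(mulr_algl s) rs subrr.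
Qed.

Lemma inBB_comm c m a : ((1 <= m)%N -> GRing.comm c Y) ->
  (forall i, (1 <= i)%N -> (i < m)%N -> GRing.comm c (X i)) ->
  (forall i, (1 <= i)%N -> (i < m)%N -> GRing.comm c (e i)) ->
  BB m a -> GRing.comm c a.
Proof.
move=> cY cX ce; elim=> //.
- by move=> r; apply/commr_sym/comm_alg.
- by move=> a1 b1 _ c1 _ c2; apply: commrD.
- by move=> a1 b1 _ c1 _ c2; apply: commrM.
Qed.

Lemma commr_X_inBB m i a : (m < i)%N -> BB m a -> X i * a = a * X i.
Proof.
move=> lt_mi; apply: inBB_comm => [m_gt0|j j_gt0 lt_jm|j j_gt0 lt_jm].
- by apply/commr_sym/(ax_YX ax); lia.
- by apply: (ax_XX_far ax); rewrite /far; lia.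
- by apply: (ax_Xe_far ax); rewrite /far; lia.
Qed.

Lemma commr_e_inBB m i a : (m < i)%N -> BB m a -> e i * a = a * e i.
Proof.
move=> lt_mi; apply: inBB_comm => [m_gt0|j j_gt0 lt_jm|j j_gt0 lt_jm].
- by apply/commr_sym/(ax_Ye ax); lia.
- by apply/commr_sym/(ax_Xe_far ax); rewrite /far; lia.
- by apply: (ax_ee_far ax); rewrite /far; lia.
Qed.

Lemma commr_Xinv_inBB m i a : (m < i)%N -> BB m a -> Xinv i * a = a * Xinv i.
Proof.
move=> lt_mi ha; apply/commr_sym; rewrite /bXinv.
have ce := commr_sym (commr_e_inBB lt_mi ha).
apply: commrD; last by rewrite -mulr_algl; apply/commrM/ce/commr_sym/comm_alg.
by apply: commrB; [apply/commr_sym/(commr_X_inBB lt_mi) | apply/commr_sym/comm_alg].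
Qed.


(* In lemma names, a letter followed by S carries an index one larger than
   that of the unmarked letters. *)
Section Adjacent.
Variable a : nat.
Hypothesis a_gt0 : (1 <= a)%N.
Let aS_gt0 : (1 <= a.+1)%N. Proof. by []. Qed.
Let adjS : adj a.+1 a. Proof. by rewrite /adj eqxx. Qed.
Let adjS' : adj a a.+1. Proof. by rewrite /adj eqxx orbT. Qed.

Lemma braid_XXSX : X a * X a.+1 * X a = X a.+1 * X a * X a.+1.
Proof. exact: (ax_braid ax a_gt0 aS_gt0 adjS'). Qed.
Lemma eXSX : e a * X a.+1 * X a = X a.+1 * X a * e a.+1.
Proof. exact: (ax_eXX ax true a_gt0 aS_gt0 adjS'). Qed.
Lemma eSXXS : e a.+1 * X a * X a.+1 = X a * X a.+1 * e a.
Proof. exact: (ax_eXX ax true aS_gt0 a_gt0 adjS). Qed.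
Lemma eSXXS_eSe : e a.+1 * X a * X a.+1 = e a.+1 * e a.
Proof. exact: (ax_eXX' ax true aS_gt0 a_gt0 adjS). Qed.
Lemma XSXeS : X a.+1 * X a * e a.+1 = e a * e a.+1.
Proof. exact: (ax_XXe ax true aS_gt0 a_gt0 adjS). Qed.
Lemma XXSe : X a * X a.+1 * e a = e a.+1 * e a.
Proof. exact: (ax_XXe ax true a_gt0 aS_gt0 adjS'). Qed.
Lemma eSeeS : e a.+1 * e a * e a.+1 = e a.+1.
Proof. exact: (ax_eee ax aS_gt0 a_gt0 adjS). Qed.
Lemma eSeXS : e a.+1 * e a * X a.+1 = e a.+1 * Xinv a.
Proof. exact: (ax_eeX ax true aS_gt0 a_gt0 adjS). Qed.
Lemma eSeXinvS : e a.+1 * e a * Xinv a.+1 = e a.+1 * X a.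
Proof. exact: (ax_eeX ax false aS_gt0 a_gt0 adjS). Qed.
Lemma XSeeS : X a.+1 * e a * e a.+1 = Xinv a * e a.+1.
Proof. exact: (ax_Xee ax true aS_gt0 a_gt0 adjS). Qed.
Lemma XinvSeeS : Xinv a.+1 * e a * e a.+1 = X a * e a.+1.
Proof. exact: (ax_Xee ax false aS_gt0 a_gt0 adjS). Qed.
Lemma eSXeS : e a.+1 * X a * e a.+1 = lam^-1 *: e a.+1.
Proof. exact: (ax_eXe ax true aS_gt0 a_gt0 adjS). Qed.
Lemma XSeXS : X a.+1 * e a * X a.+1 = Xinv a * e a.+1 * Xinv a.
Proof. exact: (ax_XeX ax aS_gt0 a_gt0 adjS). Qed.
Lemma XSeXinvS : X a.+1 * e a * Xinv a.+1 = Xinv a * e a.+1 * X a.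
Proof. exact: (ax_XeXinv ax aS_gt0 a_gt0 adjS). Qed.

End Adjacent.

(** * Jucys-Murphy elements *)

Definition Yinv : A := (bq0 D)^-1 *: (Y - (bq1 D)%:A).

Fixpoint J_rec (k : nat) : A :=
  if k is m.+1 then (if m is 0 then Y else X m * J_rec m * X m) else Y.
Fixpoint Jinv_rec (k : nat) : A :=
  if k is m.+1 then (if m is 0 then Yinv else Xinv m * Jinv_rec m * Xinv m)
  else Yinv.

Fact J_key : unit. Proof. by []. Qed.
Definition J := locked_with J_key J_rec.
Definition Jinv := locked_with J_key Jinv_rec.

Lemma J1 : J 1 = Y. Proof. by rewrite /J unlock. Qed.
Lemma Jinv1 : Jinv 1 = Yinv. Proof. by rewrite /Jinv unlock. Qed.
Lemma JS m : (1 <= m)%N -> J m.+1 = X m * J m * X m.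
Proof. by rewrite /J unlock; case: m. Qed.
Lemma JinvS m : (1 <= m)%N -> Jinv m.+1 = Xinv m * Jinv m * Xinv m.
Proof. by rewrite /Jinv unlock; case: m. Qed.
Lemma bYkS m : (1 <= m)%N -> bYk D m.+1 = X m * bYk D m * Xinv m.
Proof. by case: m. Qed.

Lemma inBB_conj (c : nat -> A) (s t : nat -> A) :
  (forall m, (1 <= m)%N -> BB m.+1 (s m) /\ BB m.+1 (t m)) ->
  BB 1 (c 1%N) -> (forall m, (1 <= m)%N -> c m.+1 = s m * c m * t m) ->
  forall b, (1 <= b)%N -> BB b (c b).
Proof.
move=> hst c1 cS; elim=> // b IH _; case: (posnP b) => [-> //|b_gt0].
have [hs ht] := hst b b_gt0.
by rewrite cS //; apply: bb_mul => //; apply: bb_mul => //; apply/inBBS/IH.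
Qed.

Lemma inBB_J b : (1 <= b)%N -> BB b (J b).
Proof.
apply: (inBB_conj (s := X) (t := X)) => [m m_gt0||]; last exact: JS.
  by split; apply: bb_X.
by rewrite J1; apply: bb_Y.
Qed.

Lemma inBB_Jinv b : (1 <= b)%N -> BB b (Jinv b).
Proof.
apply: (inBB_conj (s := Xinv) (t := Xinv)) => [m m_gt0||]; last exact: JinvS.
  by split; apply: inBB_Xinv.
by rewrite Jinv1; apply: inBBZ; apply: inBBB; [apply: bb_Y | apply: bb_scal].
Qed.

Lemma inBB_bYk b : (1 <= b)%N -> BB b (bYk D b).
Proof.
apply: (inBB_conj (s := X) (t := Xinv)) => [m m_gt0||]; last exact: bYkS.
  by split; [apply: bb_X | apply: inBB_Xinv].
exact: bb_Y.
Qed.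

Lemma mulJinvJ b : (1 <= b)%N -> Jinv b * J b = 1.
Proof.
elim: b => // b IH _; case: (posnP b) => [-> | b_gt0].
  rewrite J1 Jinv1 /Yinv -scalerAl mulrBl (ax_Y2 ax) mulr_algl addrAC subrr add0r.
  by rewrite scalerA mulVr ?scale1r // (ax_q0_unit ax).
rewrite JS // JinvS //; normalize_word.
rewrite_word (mulXinvX b_gt0); rewrite_word (IH b_gt0).
by rewrite_word (mulXinvX b_gt0).
Qed.

Lemma commr_J_gens b : (1 <= b)%N -> GRing.comm (J b.+1) Y /\
  forall i, (1 <= i)%N -> (i < b)%N ->
    GRing.comm (J b.+1) (X i) /\ GRing.comm (J b.+1) (e i).
Proof.
elim: b => // b IH _; case: (posnP b) => [-> | b_gt0].
  split=> [|i]; last lia.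
  by rewrite /GRing.comm JS // J1; normalize_word; rewrite_word (ax_YX1 ax).
have [cY ci] := IH b_gt0.
have cXJ := commr_X_inBB (ltnSn b) (inBB_J b_gt0).
have ceJ := commr_e_inBB (ltnSn b) (inBB_J b_gt0).
split=> [|i i_gt0 lt_ib]; rewrite JS //.
  have cXY : GRing.comm (X b.+1) Y by apply/commr_sym/(ax_YX ax).
  by apply/commr_sym/commrM; [apply: commrM|]; apply/commr_sym.
case: (ltnP i b) => lt_ib'.
  have [cXi cei] := ci i i_gt0 lt_ib'.
  have cXX : GRing.comm (X b.+1) (X i) by apply: (ax_XX_far ax); rewrite /far; lia.
  have cXe : GRing.comm (X b.+1) (e i) by apply: (ax_Xe_far ax); rewrite /far; lia.
  by split; apply/commr_sym/commrM; [apply: commrM| |apply: commrM|];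
    apply/commr_sym.
have -> : i = b by lia.
rewrite /GRing.comm JS //; split; normalize_word.
- rewrite_word (braid_XXSX b_gt0); rewrite (mulrA_ctx2 cXJ); normalize_word.
  by rewrite_word (esym (braid_XXSX b_gt0)).
- rewrite_word (eXSX b_gt0).
  rewrite (mulrA_ctx2 ceJ); normalize_word.
  by rewrite_word (eSXXS b_gt0).
Qed.

Lemma commr_J_inBB b a : (1 <= b)%N -> BB b a -> J b.+1 * a = a * J b.+1.
Proof.
move=> b_gt0; have [cY ci] := commr_J_gens b_gt0.
by apply: inBB_comm => // i i_gt0 lt_ib; case: (ci i i_gt0 lt_ib).
Qed.

Lemma JXJe b : (1 <= b)%N -> J b * X b * J b * e b = e b.
Proof.
elim: b => // b IH _; case: (posnP b) => [-> | b_gt0].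
  by rewrite J1; exact: (ax_YXYe ax).
have cXJ := commr_X_inBB (ltnSn b) (inBB_J b_gt0).
rewrite JS //; normalize_word; rewrite_word (braid_XXSX b_gt0).
rewrite (mulrA_ctx2 cXJ (X b * e b.+1)) -!mulrA.
rewrite (mulrA_ctx2 (esym cXJ) (X b * (J b * _))) -!mulrA.
rewrite_word (XSXeS b_gt0); rewrite_word (IH b_gt0); rewrite_word (XXSe b_gt0).
by rewrite_word (eSeeS b_gt0).
Qed.

Lemma XJe b : (1 <= b)%N -> X b * J b * e b = Jinv b * e b.
Proof.
by move=> b_gt0; rewrite -[in RHS](JXJe b_gt0) !mulrA mulJinvJ // mul1r.
Qed.

Lemma JSe b : (1 <= b)%N -> J b.+1 * e b = lam *: (Jinv b * e b).
Proof. by move=> b_gt0; rewrite JS // -mulrA mulXe // -scalerAr XJe. Qed.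

Lemma JSX b : (1 <= b)%N ->
  J b.+1 * X b = X b * J b + delta *: J b.+1 - (delta * lam) *: (Jinv b * e b).
Proof.
move=> b_gt0; rewrite !JS // -!mulrA (ax_XX ax b_gt0) !mulrDr !mulrN.
by rewrite -!scalerAr mulr1 !mulrA XJe.
Qed.

Lemma XSeJSXS k : (1 <= k)%N ->
  X k.+1 * e k * J k.+1 * X k.+1 = Xinv k * e k.+1 * X k * J k.+2.
Proof.
move=> k_gt0; rewrite (JS (ltn0Sn k)) -(XSeXinvS k_gt0); normalize_word.
by rewrite_word (mulXinvX (ltn0Sn k)).
Qed.

Lemma eSeJXeS b : (1 <= b)%N -> e b.+1 * e b * J b * X b * e b.+1 = Jinv b * e b.+1.
Proof.
move=> b_gt0; have Jinv_in := inBB_Jinv b_gt0.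
normalize_word; rewrite_word (esym (XinvSeeS b_gt0)).
rewrite_word (esym (commr_Xinv_inBB (ltnSn b) (inBB_J b_gt0))).
rewrite_word (eSeXinvS b_gt0); rewrite_word (XJe b_gt0).
rewrite_word (commr_e_inBB (ltnSn b) Jinv_in).
by rewrite_word (eSeeS b_gt0).
Qed.

Lemma XinvSXeS b : (1 <= b)%N -> Xinv b.+1 * X b * e b.+1 =
  e b * e b.+1 - delta *: (X b * e b.+1) + (delta * lam^-1) *: e b.+1.
Proof.
move=> b_gt0; rewrite /bXinv ![in LHS]mulrDl !mulNr XSXeS // -!scalerAl !mul1r.
by rewrite -!mulrA (mulrA3 (eSXeS b_gt0)) scalerA.
Qed.

Lemma eJe_step k z : BB k.+1 z -> e k.+1 * J k.+1 * e k.+1 = z * e k.+1 ->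
  e k.+2 * J k.+2 * e k.+2 =
  (z - delta *: Jinv k.+1 + (delta * lam^-1) *: J k.+1) * e k.+2.
Proof.
move=> hz ez; have b_gt0 : (1 <= k.+1)%N by [].
have ce a : BB k.+1 a -> e k.+2 * a = a * e k.+2 by apply: commr_e_inBB.
rewrite (JS b_gt0); normalize_word; rewrite_word (esym (eSeXinvS b_gt0)).
rewrite_word (commr_Xinv_inBB (ltnSn _) (inBB_J b_gt0)).
rewrite (mulrA3 (XinvSXeS b_gt0)) !mulrDr !mulrN -!scalerAr.
have -> : e k.+2 * (e k.+1 * (J k.+1 * (e k.+1 * e k.+2))) = z * e k.+2.
  rewrite_word ez; rewrite !mulrA (ce z) //.
  by rewrite -!mulrA (mulrA3 (eSeeS b_gt0)).
have -> : e k.+2 * (e k.+1 * (J k.+1 * (X k.+1 * e k.+2))) = Jinv k.+1 * e k.+2.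
  exact: (mulrA5 (eSeJXeS b_gt0)).
have -> : e k.+2 * (e k.+1 * (J k.+1 * e k.+2)) = J k.+1 * e k.+2.
  have Jin := inBB_J b_gt0.
  by rewrite -(ce _ Jin) !mulrA (eSeeS b_gt0) ce.
by rewrite [in RHS]mulrDl [in RHS]mulrDl mulNr -!scalerAl.
Qed.

Lemma eYe k : (1 <= k)%N -> e k * bYk D k * e k = bA D *: e k.
Proof.
elim: k => // k IH _; case: (posnP k) => [-> | k_gt0]; first exact: (ax_eYe ax).
rewrite bYkS //; normalize_word; rewrite_word (esym (eSeXinvS k_gt0)).
rewrite_word (esym (XSeeS k_gt0)).
rewrite_word (commr_Xinv_inBB (ltnSn k) (inBB_bYk k_gt0)).
rewrite_word (mulXinvX (ltn0Sn k)); rewrite_word (IH k_gt0).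
by rewrite_word (eSeeS k_gt0).
Qed.

(** * Spanning sets and existence of the conditional expectation *)

Inductive BBspan (m : nat) (G : A -> Prop) : A -> Prop :=
  | BBspan_gen v g w : BB m v -> G g -> BB m w -> BBspan m G (v * g * w)
  | BBspan_add a b : BBspan m G a -> BBspan m G b -> BBspan m G (a + b).

Section BBspanTheory.
Variables (m : nat) (G : A -> Prop).
Local Notation span := (BBspan m G).

Lemma BBspanMl v s : BB m v -> span s -> span (v * s).
Proof.
move=> hv; elim=> [v' g w hv' hg hw|a b _ ha _ hb]; last first.
  by rewrite mulrDr; constructor.
by rewrite !mulrA; constructor => //; apply: bb_mul.
Qed.

Lemma BBspanMr v s : BB m v -> span s -> span (s * v).
Proof.
move=> hv; elim=> [v' g w hv' hg hw|a b _ ha _ hb]; last first.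
  by rewrite mulrDl; constructor.
by rewrite -mulrA; constructor => //; apply: bb_mul.
Qed.

Lemma BBspanZ r s : span s -> span (r *: s).
Proof. by rewrite -mulr_algl; apply: BBspanMl; apply: bb_scal. Qed.

Lemma BBspanB s t : span s -> span t -> span (s - t).
Proof. by move=> hs ht; constructor => //; rewrite -scaleN1r; apply: BBspanZ. Qed.

Lemma BBspan_genl v g : BB m v -> G g -> span (v * g).
Proof. by move=> hv hg; rewrite -[v * g]mulr1; constructor => //; apply: inBB1. Qed.

Lemma BBspan_genr g w : G g -> BB m w -> span (g * w).
Proof. by move=> hg hw; rewrite -[g]mul1r; constructor => //; apply: inBB1. Qed.

Lemma BBspan_gen1 g : G g -> span g.
Proof. by move=> hg; rewrite -[g]mul1r; apply: BBspan_genl => //; apply: inBB1. Qed.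

Lemma BBspan_inBB v : G 1 -> BB m v -> span v.
Proof. by move=> G1 hv; rewrite -[v]mulr1; apply: BBspan_genl. Qed.

End BBspanTheory.

Definition new_gen m g :=
  (m = 0%N /\ g = Y) \/ ((1 <= m)%N /\ (g = X m \/ g = e m)).

Lemma BBS_sub_BBspan m G : G 1 ->
  (forall v gm w g, BB m v -> G gm -> BB m w -> new_gen m g ->
     BBspan m G (v * gm * w * g)) ->
  forall a, BB m.+1 a -> BBspan m G a.
Proof.
move=> G1 closedG.
have spanM_new s g : BBspan m G s -> new_gen m g -> BBspan m G (s * g).
  move=> hs hg; elim: hs => [v gm w hv hgm hw|a b _ ha _ hb]; first exact: closedG.
  by rewrite mulrDl; constructor.
suff spanM a : BB m.+1 a -> forall s, BBspan m G s -> BBspan m G (s * a).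
  by move=> a ha; rewrite -[a]mul1r; apply: spanM => //; apply: BBspan_gen1.
elim=> [r s hs|_ s hs|i i_gt0 lt_im s hs|i i_gt0 lt_im s hs|a1 b1 _ h1 _ h2 s hs|
        a1 b1 _ h1 _ h2 s hs].
- by apply: BBspanMr => //; apply: bb_scal.
- case: (posnP m) => [m0|m_gt0]; first by apply: spanM_new => //; left.
  by apply: BBspanMr => //; apply: bb_Y.
- case: (ltnP i m) => lt_im'; first by apply: BBspanMr => //; apply: bb_X.
  have -> : i = m by lia.
  by apply: spanM_new => //; right; split; [lia | left].
- case: (ltnP i m) => lt_im'; first by apply: BBspanMr => //; apply: bb_e.
  have -> : i = m by lia.
  by apply: spanM_new => //; right; split; [lia | right].
- by rewrite mulrDr; constructor; [apply: h1 | apply: h2].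
- by rewrite mulrA; apply/h2/h1.
Qed.

Definition has_cond_exp b := forall a, BB b.+1 a ->
  exists z, BB b z /\ e b.+1 * a * e b.+1 = z * e b.+1.

Lemma has_cond_exp_span b G : (forall a, BB b.+1 a -> BBspan b G a) ->
  (forall g, G g -> exists z, BB b z /\ e b.+1 * g * e b.+1 = z * e b.+1) ->
  has_cond_exp b.
Proof.
move=> spanG expG a /spanG.
elim=> [v g w hv hg hw|a1 a2 _ [z1 [h1 e1]] _ [z2 [h2 e2]]]; last first.
  by exists (z1 + z2); split; [constructor | rewrite mulrDr mulrDl e1 e2 mulrDl].
have [z [hz ez]] := expG g hg.
exists (v * z * w); split; first by apply: bb_mul => //; apply: bb_mul.
have cv := commr_e_inBB (ltnSn b) hv.
have cw := esym (commr_e_inBB (ltnSn b) hw).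
by rewrite !mulrA cv -!mulrA cw; rewrite_word ez; rewrite -cw !mulrA.
Qed.

(* A spanning set of BB_{b+1} as a BB_b-bimodule; the Jucys-Murphy element
   J_{b+1} plays the role of the paper's Y_{b+1}. *)
Definition Gamma (b : nat) (g : A) : Prop :=
  if b is 0 then g = 1 \/ g = Y
  else g = 1 \/ g = e b \/ g = X b \/ g = J b.+1 \/ g = e b * J b.+1.

Lemma Gamma1 b : Gamma b 1.
Proof. by case: b => /=; left. Qed.

Lemma inBB_Gamma k g : Gamma k g -> BB k.+1 g.
Proof.
case: k => [[] -> |k [->|[->|[->|[->|->]]]]]; try exact: inBB1.
- exact: bb_Y.
- exact: bb_e.
- exact: bb_X.
- exact: inBB_J.
- by apply: bb_mul; [apply: bb_e | apply: inBB_J].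
Qed.

Lemma commr_Gamma k g u : Gamma k.+1 g -> BB k u -> g * u = u * g.
Proof.
move=> hg hu; have Ju := commr_J_inBB (ltn0Sn k) (inBBS hu).
have eu := commr_e_inBB (ltnSn k) hu.
case: hg => [->|[->|[->|[->|->]]]] //.
- exact/commr_sym/commr1.
- exact: commr_X_inBB (ltnSn k) hu.
- by apply/commr_sym/commrM; apply/commr_sym.
Qed.

Lemma Gamma_cases k g : Gamma k g ->
  [\/ g = 1, g = J k.+1 |
      (1 <= k)%N /\ [\/ g = e k, g = X k | g = e k * J k.+1]].
Proof.
case: k => [[] ->|k [->|[->|[->|[->|->]]]]].
- exact: Or31.
- by apply: Or32; rewrite J1.
- exact: Or31.
- by apply: Or33; split=> //; apply: Or31.
- by apply: Or33; split=> //; apply: Or32.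
- exact: Or32.
- by apply: Or33; split=> //; apply: Or33.
Qed.

Section Step.
Variable k : nat.
Hypothesis expk : has_cond_exp k.
Local Notation b := k.+1.
Local Notation span := (BBspan k.+1 (Gamma k.+1)).
Let b_gt0 : (1 <= b)%N. Proof. by []. Qed.
Let X_in : (1 <= k)%N -> BB b (X k). Proof. by move=> k_gt0; apply: bb_X. Qed.

Lemma Gamma_e : Gamma b (e b). Proof. by right; left. Qed.
Lemma Gamma_X : Gamma b (X b). Proof. by right; right; left. Qed.
Lemma Gamma_J : Gamma b (J b.+1). Proof. by right; right; right; left. Qed.
Lemma Gamma_eJ : Gamma b (e b * J b.+1). Proof. by right; right; right; right. Qed.
Local Hint Resolve Gamma1 Gamma_e Gamma_X Gamma_J Gamma_eJ : core.

Lemma eBBe v : BB b v -> exists z, BB b z /\ e b * v * e b = z * e b.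
Proof. by case/expk=> z [hz ez]; exists z; split=> //; apply: inBBS. Qed.

Lemma span_eBBe v : BB b v -> span (e b * v * e b).
Proof. by case/eBBe=> z [hz ->]; apply: BBspan_genl. Qed.

Lemma span_JX : span (J b.+1 * X b).
Proof.
rewrite JSX //; apply: BBspanB; first apply: BBspan_add.
- by apply: BBspan_genr => //; apply: inBB_J.
- by apply/BBspanZ/BBspan_gen1.
- by apply: BBspanZ; apply: BBspan_genl => //; apply: inBB_Jinv.
Qed.

Lemma span_Je : span (J b.+1 * e b).
Proof.
by rewrite JSe //; apply: BBspanZ; apply: BBspan_genl => //; apply: inBB_Jinv.
Qed.

Lemma span_eGX g : Gamma k g -> span (e b * g * X b).
Proof.
case/Gamma_cases => [->|->|[k_gt0 [->|->|->]]].
- by rewrite mulr1 muleX //; apply/BBspanZ/BBspan_gen1.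
- have -> : e b * J b * X b = lam^-1 *: (e b * J b.+1).
    rewrite (JS b_gt0); normalize_word; rewrite_word (muleX b_gt0).
    by rewrite scalerA mulVr ?scale1r // lam_unit.
  by apply/BBspanZ/BBspan_gen1.
- by rewrite (eSeXS k_gt0); apply: BBspan_genr => //; apply: inBB_Xinv.
- by rewrite (eSXXS_eSe k_gt0); apply: BBspan_genr => //; apply: bb_e.
- rewrite mulrA -(eSXXS_eSe k_gt0) -!mulrA (mulrA3 (esym (JS b_gt0))).
  rewrite -(commr_J_inBB b_gt0 (X_in k_gt0)) mulrA.
  by apply: BBspan_genr => //; apply: X_in.
Qed.

Lemma span_XGX g : Gamma k g -> span (X b * g * X b).
Proof.
case/Gamma_cases => [->|->|[k_gt0 [->|->|->]]].
- rewrite mulr1 (ax_XX ax b_gt0); apply: BBspanB; first apply: BBspan_add.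
  + by apply: BBspan_inBB => //; apply: inBB1.
  + by apply/BBspanZ/BBspan_gen1.
  + by apply/BBspanZ/BBspan_gen1.
- by rewrite -JS //; apply: BBspan_gen1.
- by rewrite (XSeXS k_gt0); constructor => //; apply: inBB_Xinv.
- by rewrite -(braid_XXSX k_gt0); constructor => //; apply: X_in.
- rewrite mulrA XSeJSXS //.
  have -> : Xinv k * e b * X k * J b.+1 = Xinv k * (e b * J b.+1) * X k.
    by rewrite -!mulrA (commr_J_inBB b_gt0 (X_in k_gt0)).
  by constructor => //; [apply: inBB_Xinv | apply: X_in].
Qed.

Lemma span_XGe g : Gamma k g -> span (X b * g * e b).
Proof.
case/Gamma_cases => [->|->|[k_gt0 [->|->|->]]].
- by rewrite mulr1 mulXe //; apply/BBspanZ/BBspan_gen1.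
- by rewrite XJe //; apply: BBspan_genl => //; apply: inBB_Jinv.
- by rewrite (XSeeS k_gt0); apply: BBspan_genl => //; apply: inBB_Xinv.
- by rewrite (XSXeS k_gt0); apply: BBspan_genl => //; apply: bb_e.
(* X_{k+1} e_k J_{k+1} e_{k+1} = Xinv_k e_{k+1} (X_k Jinv_{k+1}) e_{k+1} *)
- rewrite {1}(_ : e b = lam^-1 *: (X b * e b)); last first.
    by rewrite mulXe // scalerA mulVr ?scale1r // lam_unit.
  rewrite -scalerAr !mulrA XSeJSXS // -(mulrA _ (J _) (e _)) JSe //.
  rewrite -scalerAr scalerA (mulVr lam_unit) scale1r.
  have [z [hz ez]] := eBBe (bb_mul (X_in k_gt0) (inBB_Jinv b_gt0)).
  rewrite -!mulrA (mulrA (X k)) (mulrA (e b)) ez mulrA.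
  by apply: BBspan_genl => //; apply: bb_mul => //; apply: inBB_Xinv.
Qed.

Lemma span_eGJX g : Gamma k g -> span (e b * g * (J b.+1 * X b)).
Proof.
move=> hg; have g_in := inBB_Gamma hg.
rewrite JSX // !mulrDr !mulrN; apply: BBspanB; first apply: BBspan_add.
- by rewrite mulrA; apply: BBspanMr; [apply: inBB_J | apply: span_eGX].
- rewrite -scalerAr; apply: BBspanZ.
  by rewrite -mulrA -(commr_J_inBB b_gt0 g_in) mulrA; apply: BBspan_genr.
- rewrite -scalerAr; apply: BBspanZ; rewrite !mulrA -(mulrA (e b)).
  by apply: span_eBBe; apply: bb_mul => //; apply: inBB_Jinv.
Qed.

Lemma span_GammaS_Gamma_new gm g g' : Gamma b gm -> Gamma k g -> new_gen b g' ->
  span (gm * g * g').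
Proof.
move=> hgm hg hg'; have g_in := inBB_Gamma hg.
have cJg := commr_J_inBB b_gt0 g_in.
have {hg'} [->|->] : g' = X b \/ g' = e b by case: hg' => [[//]|[_ //]].
- case: hgm => [->|[->|[->|[->|->]]]].
  + by rewrite mul1r; apply: BBspan_genl.
  + exact: span_eGX.
  + exact: span_XGX.
  + by rewrite cJg -mulrA; apply: BBspanMl => //; apply: span_JX.
  + by rewrite -(mulrA (e b)) cJg mulrA -mulrA; apply: span_eGJX.
- case: hgm => [->|[->|[->|[->|->]]]].
  + by rewrite mul1r; apply: BBspan_genl.
  + exact: span_eBBe.
  + exact: span_XGe.
  + by rewrite cJg -mulrA; apply: BBspanMl => //; apply: span_Je.
  + rewrite -(mulrA (e b)) cJg mulrA -mulrA JSe // -scalerAr; apply: BBspanZ.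
    rewrite !mulrA -(mulrA (e b)).
    by apply: span_eBBe; apply: bb_mul => //; apply: inBB_Jinv.
Qed.

End Step.

Lemma BBspan_Gamma_step k : has_cond_exp k ->
  (forall a, BB k.+1 a -> BBspan k (Gamma k) a) ->
  forall a, BB k.+2 a -> BBspan k.+1 (Gamma k.+1) a.
Proof.
move=> expk spank; apply: BBS_sub_BBspan; first exact: Gamma1.
move=> v gm w g hv hgm hw hg.
elim: (spank w hw) => [u g' u' hu hg' hu'|w1 w2 _ h1 _ h2]; last first.
  by rewrite mulrDr mulrDl; constructor.
have cu := commr_Gamma hgm hu.
have cu' : u' * g = g * u'.
  by case: hg => [[//]|[_ [->|->]]]; apply: esym;
    [apply: commr_X_inBB (ltnSn k) hu' | apply: commr_e_inBB (ltnSn k) hu'].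
have -> : v * gm * (u * g' * u') * g = (v * u) * (gm * g' * g) * u'.
  by rewrite !mulrA -(mulrA v gm u) cu !mulrA -(mulrA _ u' g) cu' !mulrA.
apply: BBspanMr; first exact: inBBS.
apply: BBspanMl; first by apply: bb_mul => //; apply: inBBS.
exact: span_GammaS_Gamma_new.
Qed.

Lemma cond_exp_Gamma0 g : Gamma 0 g -> exists z, BB 0 z /\ e 1 * g * e 1 = z * e 1.
Proof.
case=> ->; [exists x%:A | exists (bA D)%:A]; split; try exact: bb_scal.
- by rewrite mulr1 mulee // mulr_algl.
- by rewrite (ax_eYe ax) mulr_algl.
Qed.

Lemma cond_exp_GammaS k : has_cond_exp k -> forall g, Gamma k.+1 g ->
  exists z, BB k.+1 z /\ e k.+2 * g * e k.+2 = z * e k.+2.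
Proof.
move=> expk g; have b_gt0 : (1 <= k.+1)%N by [].
case=> [->|[->|[->|[->|->]]]].
- by exists x%:A; split; [apply: bb_scal | rewrite mulr1 mulee // mulr_algl].
- by exists 1; split; [apply: inBB1 | rewrite (eSeeS b_gt0) mul1r].
- by exists lam^-1%:A; split; [apply: bb_scal | rewrite (eSXeS b_gt0) mulr_algl].
- have [z1 [hz1 ez1]] := expk _ (inBB_J b_gt0).
  exists (z1 - delta *: Jinv k.+1 + (delta * lam^-1) *: J k.+1); split.
    apply: bb_add; first apply: inBBB.
    + exact: inBBS.
    + by apply: inBBZ; apply: inBB_Jinv.
    + by apply: inBBZ; apply: inBB_J.
  by apply: eJe_step; first exact: inBBS.
- exists (lam *: Jinv k.+1); split; first by apply: inBBZ; apply: inBB_Jinv.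
  rewrite (JS b_gt0); normalize_word; rewrite_word (muleX b_gt0).
  by rewrite (mulrA5 (eSeJXeS b_gt0)).
Qed.

Lemma BBspan_Gamma0 a : BB 1 a -> BBspan 0 (Gamma 0) a.
Proof.
apply: BBS_sub_BBspan a; first exact: (Gamma1 0).
move=> v gm w g hv hgm hw hg.
have {hg} -> : g = Y by case: hg => [[_ ->]|[]].
have [s ->] := inBB0 hw.
have -> : v * gm * s%:A * Y = v * (gm * Y) * s%:A.
  by rewrite -!mulrA mulr_algl mulr_algr.
case: hgm => ->.
- by rewrite mul1r; constructor => //; [right | apply: bb_scal].
- rewrite (ax_Y2 ax); apply: BBspanMr; first exact: bb_scal.
  apply: BBspanMl => //; apply: BBspan_add.
  + by apply/BBspanZ/BBspan_gen1; right.
  + by apply: BBspan_inBB; [left | apply: bb_scal].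
Qed.

Lemma BBspan_Gamma_cond_exp b :
  (forall a, BB b.+1 a -> BBspan b (Gamma b) a) /\ has_cond_exp b.
Proof.
elim: b => [|k [spank expk]].
  split; first exact: BBspan_Gamma0.
  exact: has_cond_exp_span BBspan_Gamma0 cond_exp_Gamma0.
have spanS := BBspan_Gamma_step expk spank.
by split=> //; apply: has_cond_exp_span spanS (cond_exp_GammaS expk).
Qed.

Lemma cond_exp_exists b : has_cond_exp b.
Proof. exact: (BBspan_Gamma_cond_exp b).2. Qed.

(** * Conditional expectation and trace *)

Lemma beps_eq m a z : BB m z ->
  e m.+1 * a * e m.+1 = x *: (z * e m.+1) -> beps D m a = z.
Proof.
move=> hz ez; rewrite /beps; set P := fun _ => _.
have := epsilon_spec (inhabits 0) P (ex_intro _ z (conj hz ez)).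
set w := epsilon _ _ => -[hw ew].
apply: (ax_inj ax hw hz); congr (_ *: _).
by rewrite -(scale1r (w * _)) -(scale1r (z * _)) -(mulVr x_unit) -!scalerA -ew -ez.
Qed.

Lemma beps_spec m a : BB m.+1 a ->
  BB m (beps D m a) /\ e m.+1 * a * e m.+1 = x *: (beps D m a * e m.+1).
Proof.
case/cond_exp_exists=> z [hz ez]; set z' := x^-1 *: z.
have ez' : e m.+1 * a * e m.+1 = x *: (z' * e m.+1).
  by rewrite -scalerAl scalerA (mulrV x_unit) scale1r.
by rewrite (beps_eq (inBBZ _ hz) ez'); split=> //; apply: inBBZ.
Qed.

Lemma bepsZ m c a : BB m.+1 a -> beps D m (c *: a) = c *: beps D m a.
Proof.
case/beps_spec=> hz ez; apply: beps_eq; first exact: inBBZ.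
by rewrite -scalerAr -scalerAl ez -scalerAl !scalerA mulrC.
Qed.

Lemma btr_alg m r : btr D m r%:A = r.
Proof.
elim: m => [|m IH] /=.
  set P := fun _ => _; have := epsilon_spec (inhabits 0) P (ex_intro _ r erefl).
  by move/algr_inj.
rewrite (@beps_eq m _ r%:A) //; first exact: bb_scal.
by rewrite mulr_algr mulr_algl -scalerAl mulee // !scalerA mulrC.
Qed.

Lemma btrZ m c w : BB m w -> btr D m (c *: w) = c * btr D m w.
Proof.
elim: m c w => [|m IH] c w hw.
  by have [r ->] := inBB0 hw; rewrite scalerA !btr_alg.
by have [hz _] := beps_spec hw; rewrite /= bepsZ // IH.
Qed.

Section ScalarOnE.
Variables (n : nat) (g : A) (t : R).
Hypothesis ege : e n.+1 * g * e n.+1 = t *: e n.+1.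

Lemma beps_mid w1 w2 : BB n w1 -> BB n w2 ->
  beps D n (w1 * g * w2) = (x^-1 * t) *: (w1 * w2).
Proof.
move=> h1 h2; apply: beps_eq; first by apply: inBBZ; apply: bb_mul.
have c1 := commr_e_inBB (ltnSn n) h1; have c2 := commr_e_inBB (ltnSn n) h2.
normalize_word; rewrite_word c1; rewrite_word (esym c2); rewrite_word ege.
by rewrite_word c2; rewrite scalerA (mulrA x) (mulrV x_unit) mul1r.
Qed.

Lemma btr_mid : btr D n.+1 g = x^-1 * t.
Proof.
by rewrite /= -[g]mul1r -[1 * g]mulr1 beps_mid ?mulr1 ?btr_alg //; apply: inBB1.
Qed.

Lemma beps_btr_mid w1 w2 : BB n w1 -> BB n w2 ->
  beps D n (w1 * g * w2) = btr D n.+1 g *: (w1 * w2) /\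
  btr D n.+1 (w1 * g * w2) = btr D n.+1 g * btr D n (w1 * w2).
Proof.
move=> h1 h2; rewrite btr_mid beps_mid //; split=> //=.
by rewrite beps_mid // btrZ //; apply: bb_mul.
Qed.

End ScalarOnE.

End BB.

Theorem lemma12 (R : idomainType) (A : algType R) (D : @BBdata R A) :
  BBaxioms D ->
  forall n : nat, (1 <= n)%N ->
  forall w1 w2 : A, inBB D n w1 -> inBB D n w2 ->
  forall g : A, g \in [:: 1; be D n; bX D n; bYk D n.+1] ->
    beps D n (w1 * g * w2) = btr D n.+1 g *: (w1 * w2) /\
    btr D n.+1 (w1 * g * w2) = btr D n.+1 g * btr D n (w1 * w2).
Proof.
move=> ax n n_gt0 w1 w2 h1 h2 g; rewrite !inE => /or4P[]/eqP->.
- by apply: (beps_btr_mid ax (t := bx D)) h1 h2; rewrite mulr1 (ax_ee ax).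
- by apply: (beps_btr_mid ax (t := 1)) h1 h2; rewrite (eSeeS ax n_gt0) scale1r.
- exact: (beps_btr_mid ax (eSXeS ax n_gt0)).
- exact: (beps_btr_mid ax (eYe ax (ltn0Sn n))).
Qed.
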